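(* For every $d<\omega$, the graph $G_d=((2^2)^d,E_d)$, where $E_d=\{\{\sigma,\tau\}\subseteq(2^2)^d:\sigma\neq\tau \text{ and } \{\sigma,\tau\}\text{ is an up-}1\text{-comb}\}$, is a cograph.
   Context: $2^2=\{0,1\}^2$; $(2^2)^d$ is the set of sequences of length $d$ with entries in $2^2$, $(2^2)^{<d}$ those of length $<d$, $\tau^\frown a$ concatenation. For $A,B\subseteq(2^2)^d$, $A$ is narrowly below $B$ if there are $\tau\in(2^2)^{<d}$, $i<2$ with every element of $A$ extending $\tau^\frown(i,0)$ and every element of $B$ extending $\tau^\frown(i,1)$. The up-$1$-combs form the smallest class of finite subsets of $(2^2)^d$ containing singletons and containing $A\cup B$ whenever $A,B$ are in it, $|A|\le1$ and $A$ is narrowly below $B$. For graphs $G_0=(V_0,E_0)$, $G_1=(V_1,E_1)$ on disjoint vertex sets, the coproduct is $(V_0\cup V_1,E_0\cup E_1)$ and the graph join is $(V_0\cup V_1,E_0\cup E_1\cup\{\{a,b\}:a\in V_0,b\in V_1\})$. Cographs form the smallest class of graphs containing the one-vertex graph and closed (up to isomorphism) under coproducts and graph joins. *)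

From mathcomp Require Import all_boot.
Set Implicit Arguments. Unset Strict Implicit. Unset Printing Implicit Defensive.

(* 2^2 is encoded as bool * bool (0 = false, 1 = true);
   (2^2)^d is d.-tuple (bool * bool). *)
Definition vtx (d : nat) : finType := (d.-tuple (bool * bool))%type.

Definition narrowly_below (d : nat) (A B : {set vtx d}) : Prop :=
  exists (tau : seq (bool * bool)) (i : bool),
    [/\ size tau < d,
        (forall s, s \in A -> prefix (rcons tau (i, false)) (tval s)) &
        (forall s, s \in B -> prefix (rcons tau (i, true)) (tval s))].

Inductive up1comb (d : nat) : {set vtx d} -> Prop :=
  | up1comb_single : forall s, up1comb [set s]
  | up1comb_union : forall A B, up1comb A -> up1comb B ->
      #|A| <= 1 -> narrowly_below A B -> up1comb (A :|: B).

Definition coproduct_rel (V0 V1 : Type) (E0 : V0 -> V0 -> Prop)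
  (E1 : V1 -> V1 -> Prop) (x y : V0 + V1) : Prop :=
  match x, y with
  | inl a, inl b => E0 a b
  | inr a, inr b => E1 a b
  | _, _ => False
  end.

Definition join_rel (V0 V1 : Type) (E0 : V0 -> V0 -> Prop)
  (E1 : V1 -> V1 -> Prop) (x y : V0 + V1) : Prop :=
  match x, y with
  | inl a, inl b => E0 a b
  | inr a, inr b => E1 a b
  | _, _ => True
  end.

Inductive cograph : forall V : Type, (V -> V -> Prop) -> Prop :=
  | cograph_one : cograph (fun _ _ : unit => False)
  | cograph_coprod : forall (V0 V1 : Type) (E0 : V0 -> V0 -> Prop)
      (E1 : V1 -> V1 -> Prop), cograph E0 -> cograph E1 ->
      cograph (coproduct_rel E0 E1)
  | cograph_join : forall (V0 V1 : Type) (E0 : V0 -> V0 -> Prop)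
      (E1 : V1 -> V1 -> Prop), cograph E0 -> cograph E1 ->
      cograph (join_rel E0 E1)
  | cograph_iso : forall (V V' : Type) (E : V -> V -> Prop)
      (E' : V' -> V' -> Prop) (f : V -> V'), bijective f ->
      (forall x y, E x y <-> E' (f x) (f y)) ->
      cograph E -> cograph E'.

Definition Gd_edge (d : nat) (s t : vtx d) : Prop :=
  s <> t /\ up1comb [set s; t].

From mathcomp Require Import all_boot.
From Stdlib Require Import Setoid.
Set Implicit Arguments. Unset Strict Implicit. Unset Printing Implicit Defensive.

(* Two distinct vertices form an up-1-comb exactly when, at the first
   position where they differ, their letters agree in the first coordinate.
   Hence whether [a :: s] and [b :: t] are adjacent in G_(d+1) depends only
   on the letters a, b and, when a = b, on the adjacency of s and t in G_d:
   G_(d+1) is the coproduct over a.1 of the joins over a.2 of copies of G_d. *)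

Definition branch_below (s t : seq (bool * bool)) : Prop :=
  exists (tau : seq (bool * bool)) (i : bool),
    prefix (rcons tau (i, false)) s /\ prefix (rcons tau (i, true)) t.

Definition branch (s t : seq (bool * bool)) : Prop :=
  branch_below s t \/ branch_below t s.

Lemma branch_below_cons a b s t :
  branch_below (a :: s) (b :: t) <->
  (a = b /\ branch_below s t) \/ [/\ a.1 = b.1, a.2 = false & b.2 = true].
Proof.
split.
- case=> [[|c tau] [i []]]; rewrite [rcons _ _]/= [rcons _ _]/= !prefix_cons.
  + by move=> /andP[/eqP <- _] /andP[/eqP <- _]; right.
  + by move=> /andP[/eqP <- Hs] /andP[/eqP <- Ht]; left; split; last exists tau, i.
- case=> [[<- [tau [i [Hs Ht]]]]|[]].
  + by exists (a :: tau), i; rewrite [rcons _ _]/= [rcons _ _]/= !prefix_cons eqxx Hs Ht.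
  + case: a b => [x y] [x' y'] /= <- -> ->.
    by exists [::], x; rewrite /= !eqxx !prefix0s.
Qed.

Lemma branch_cons a b s t :
  branch (a :: s) (b :: t) <-> (a = b /\ branch s t) \/ (a.1 = b.1 /\ a.2 <> b.2).
Proof.
rewrite /branch !branch_below_cons; case: a b => [x y] [x' y'] /=.
split.
- case=> [[[-> Hst]|[-> -> ->]]|[[-> Hts]|[-> -> ->]]]; by [left; split; auto | right].
- case=> [[[-> ->] [Hst|Hts]]|[-> Hyy']]; first by left; left.
  + by right; left.
  + by case: y y' Hyy' => [] [] // _; [right | left]; right.
Qed.

Lemma branch_below_neq s t : branch_below s t -> s <> t.
Proof.
case=> tau [i [/prefixP [s' ->] /prefixP [t' ->]]].
move/(f_equal (nth (i, true) ^~ (size tau))).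
by rewrite !nth_cat !size_rcons ltnSn !nth_rcons ltnn eqxx.
Qed.

Lemma up1comb_branch d (C : {set vtx d}) : up1comb C ->
  forall s t, s \in C -> t \in C -> s <> t -> branch (tval s) (tval t).
Proof.
elim=> [x|A B _ _ _ IHB A_le1 [tau [i [_ belowA belowB]]]] s t.
- by rewrite !inE => /eqP -> /eqP ->.
- rewrite !inE => /orP[sA|sB] /orP[tA|tB] st.
  + by case: st; move/card_le1_eqP: A_le1; apply.
  + by left; exists tau, i; split; auto.
  + by right; exists tau, i; split; auto.
  + exact: IHB.
Qed.

Lemma up1comb_pair d (s t : vtx d) :
  branch_below (tval s) (tval t) -> up1comb [set s; t].
Proof.
case=> tau [i [Hs Ht]].
apply: up1comb_union; [exact: up1comb_single | exact: up1comb_single |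
  by rewrite cards1 |].
exists tau, i; split; last 2 first.
- by move=> u; rewrite inE => /eqP ->.
- by move=> u; rewrite inE => /eqP ->.
case/prefixP: Hs => w /(f_equal size).
by rewrite size_cat size_rcons size_tuple => ->; rewrite addSn ltnS leq_addr.
Qed.

Lemma Gd_edgeE d (s t : vtx d) : Gd_edge s t <-> branch (tval s) (tval t).
Proof.
split.
- case=> st comb_st; apply: (up1comb_branch comb_st) => //; by rewrite !inE eqxx ?orbT.
- move=> st; split.
  + by move=> E; case: st => /branch_below_neq; rewrite E.
  + case: st => [|/up1comb_pair]; first exact: up1comb_pair.
    by rewrite setUC.
Qed.

Definition cons_tuple d (a : bool * bool) (s : vtx d) : vtx d.+1 :=
  [tuple of a :: tval s].

Lemma Gd_edge_cons d a b (s t : vtx d) :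
  Gd_edge (cons_tuple a s) (cons_tuple b t) <->
  (a = b /\ Gd_edge s t) \/ (a.1 = b.1 /\ a.2 <> b.2).
Proof. by rewrite !Gd_edgeE branch_cons. Qed.

Lemma cograph_Gd0 : cograph (@Gd_edge 0).
Proof.
apply: (@cograph_iso unit (vtx 0) (fun _ _ => False) _ (fun _ => [tuple]));
  last exact: cograph_one.
- by exists (fun _ => tt); [case | move=> t; rewrite (tuple0 t)].
- by move=> [] []; split=> // [[]].
Qed.

Section Step.

Variable d : nat.

(* The outer sum is indexed by the first coordinate of the head letter,
   the inner sums by the second one. *)
Definition step_vtx := ((vtx d + vtx d) + (vtx d + vtx d))%type.

Definition step_head (x : step_vtx) : bool * bool :=
  match x with
  | inl (inl _) => (false, false)
  | inl (inr _) => (false, true)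
  | inr (inl _) => (true, false)
  | inr (inr _) => (true, true)
  end.

Definition step_tail (x : step_vtx) : vtx d :=
  match x with inl (inl s) | inl (inr s) | inr (inl s) | inr (inr s) => s end.

Definition step_cons (x : step_vtx) : vtx d.+1 := cons_tuple (step_head x) (step_tail x).

Definition step_uncons (t : vtx d.+1) : step_vtx :=
  let r := [tuple of behead t] in
  match thead t with
  | (false, false) => inl (inl r)
  | (false, true) => inl (inr r)
  | (true, false) => inr (inl r)
  | (true, true) => inr (inr r)
  end.

Lemma step_cons_bij : bijective step_cons.
Proof.
exists step_uncons.
- by case=> [[]|[]] s; rewrite /step_uncons /=; do 2 f_equal; apply: val_inj.
- move=> t; rewrite [t in RHS]tuple_eta /step_uncons.
  by case: (thead t) => [[] []]; apply: val_inj.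
Qed.

Lemma step_edge (x y : step_vtx) :
  coproduct_rel (join_rel (@Gd_edge d) (@Gd_edge d))
                (join_rel (@Gd_edge d) (@Gd_edge d)) x y <->
  Gd_edge (step_cons x) (step_cons y).
Proof.
rewrite Gd_edge_cons.
case: x => [[]|[]] s; case: y => [[]|[]] t /=; split;
  by [left | right | case=> [[]|[]]].
Qed.

End Step.

Theorem lemma4p3 : forall d : nat, cograph (@Gd_edge d).
Proof.
elim=> [|d IH]; first exact: cograph_Gd0.
have join_Gd := cograph_join IH IH.
apply: (cograph_iso (step_cons_bij d) (@step_edge d)).
exact: cograph_coprod.
Qed.
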